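(* Let $t\in(0,1)$ and $\gamma>0$, and let $v_\gamma(z)=(1-|z|)^\gamma$ for $z\in\mathbb{D}$. (i) If $\gamma\ge1$, then $\|C_t\|_{H^\infty_{v_\gamma}\to H^\infty_{v_\gamma}}=1$. (ii) If $\gamma\in(0,1)$, then $\|C_t\|_{H^\infty_{v_\gamma}\to H^\infty_{v_\gamma}}\le\min\{-\frac{\log(1-t)}{t},\frac{1}{\gamma}\}$.
   Context: $\mathbb{D}=\{z\in\mathbb{C}:|z|<1\}$ and $H(\mathbb{D})$ is the space of holomorphic functions on $\mathbb{D}$. For a weight $v$ (continuous non-increasing $v\colon[0,1)\to(0,\infty)$, with $v(z):=v(|z|)$), $H^\infty_v=\{f\in H(\mathbb{D}):\|f\|_{\infty,v}:=\sup_{z\in\mathbb{D}}|f(z)|v(z)<\infty\}$ with norm $\|\cdot\|_{\infty,v}$. For $t\in[0,1]$ the generalized Cesàro operator $C_t$ is defined on $f\in H(\mathbb{D})$ by $C_tf(0)=f(0)$ and $C_tf(z)=\frac{1}{z}\int_0^z\frac{f(\xi)}{1-t\xi}\,d\xi$ for $z\in\mathbb{D}\setminus\{0\}$. *)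

From Stdlib Require Import Reals.
From Coquelicot Require Import Coquelicot.
Open Scope R_scope.

Definition in_disc (z : C) : Prop := Cmod z < 1.

Definition holo_disc (f : C -> C) : Prop :=
  forall z : C, in_disc z -> @ex_derive C_AbsRing C_NormedModule f z.

Definition v_gamma (gamma : R) (z : C) : R := Rpower (1 - Cmod z) gamma.

Definition weighted_sup (v : C -> R) (f : C -> C) : Rbar :=
  Lub_Rbar (fun x => exists z, in_disc z /\ x = Cmod (f z) * v z).

Definition in_Hv (v : C -> R) (f : C -> C) : Prop :=
  holo_disc f /\ is_finite (weighted_sup v f).

(* generalized Cesaro operator: C_t f(0) = f(0) and, for z <> 0,
   C_t f(z) = (1/z) int_0^z f(xi)/(1-t xi) dxi, where the complex line
   integral along the segment [0,z] is parametrized by xi = s z, s in [0,1]. *)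
Definition cesaro (t : R) (f : C -> C) (z : C) : C :=
  if Ceq_dec z 0 then f 0
  else Cdiv (RInt (V := C_R_CompleteNormedModule)
               (fun s : R => Cmult (Cdiv (f (Cmult (RtoC s) z))
                                    (Cminus 1 (Cmult (RtoC t) (Cmult (RtoC s) z)))) z)
               0 1) z.

(* operator norm of C_t on H^infty_v:
   sup { ||C_t f||_{infty,v} : f in H^infty_v, ||f||_{infty,v} <= 1 }
   (taken over all reals below some ||C_t f||, so that +oo values are
   not silently dropped) *)
Definition cesaro_opnorm (v : C -> R) (t : R) : Rbar :=
  Lub_Rbar (fun x => exists f, in_Hv v f /\ Rbar_le (weighted_sup v f) (Finite 1)
                             /\ Rbar_le (Finite x) (weighted_sup v (cesaro t f))).

(** Write [g w = f w / (1 - t w)]; then [C_t f z] is the mean of [g] over the segment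
    [[0, z]].  Goursat's lemma (nested subdivision of triangles) makes
    [z |-> \int_[0,z] g] a primitive of [g], so this mean is holomorphic, also at [0].
    If [|f| v_gamma <= M], then [|g (s z)| <= M (1 - s|z|)^-gamma / (1 - t s |z|)].
    Bounding [(1 - s|z|)^-gamma] by [(1 - |z|)^-gamma] and [1 - t s|z|] below by [1 - t s]
    and integrating gives the factor [-log (1 - t) / t]; bounding [1 - t s |z|] below by
    [1 - s |z|] instead gives [(1 - (1 - |z|)^gamma) / (gamma |z|) <= max 1 (1/gamma)].
    The constant function [1] shows that the norm is at least [1]. *)

From Stdlib Require Import Reals Lra Lia.
From Coquelicot Require Import Coquelicot.
Open Scope R_scope.

Ltac C_field := apply injective_projections; simpl; field.

Lemma norm_C_R (z : C) : @norm R_AbsRing C_R_NormedModule z = Cmod z.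
Proof. exact (eq_sym (Cmod_norm z)). Qed.

Lemma scal_C_R (r : R) (z : C) : @scal R_AbsRing C_R_NormedModule r z = (RtoC r * z)%C.
Proof. apply injective_projections; simpl; unfold scal; simpl; unfold mult; simpl; ring. Qed.

Lemma plus_C_R (y z : C) : @plus C_R_NormedModule y z = (y + z)%C.
Proof. reflexivity. Qed.

Lemma minus_C_R (y z : C) : @minus C_R_NormedModule y z = (y - z)%C.
Proof. reflexivity. Qed.

Lemma Cminus_0_r (z : C) : (z - 0)%C = z.
Proof. ring. Qed.

Lemma Cmod_sub_sym (a b : C) : Cmod (a - b) = Cmod (b - a).
Proof. replace (a - b)%C with (- (b - a))%C by ring. apply Cmod_opp. Qed.

Lemma Cmod_sub_triangle (u v w : C) : Cmod (u - w) <= Cmod (u - v) + Cmod (v - w).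
Proof.
  replace (u - w)%C with ((u - v) + (v - w))%C by ring. apply Cmod_triangle.
Qed.

Lemma Cmod_RtoC_mul (s : R) (z : C) : 0 <= s -> Cmod (RtoC s * z) = s * Cmod z.
Proof. intros Hs. rewrite Cmod_mult, Cmod_R, Rabs_pos_eq by exact Hs. reflexivity. Qed.

Lemma in_disc_0 : in_disc 0.
Proof. unfold in_disc. rewrite Cmod_0. lra. Qed.

Lemma is_derive_C_eps (g : C -> C) (z : C) (l : C) :
  @is_derive C_AbsRing C_NormedModule g z l <->
  forall eps, 0 < eps -> exists d, 0 < d /\ forall w, Cmod (w - z) < d ->
    Cmod (g w - g z - l * (w - z)) <= eps * Cmod (w - z).
Proof.
  split.
  - intros [_ Hl] eps Heps.
    destruct (Hl z (fun P H => H) (mkposreal eps Heps)) as [d Hd].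
    exists d. split; [apply cond_pos|]. intros w Hw.
    specialize (Hd w Hw). simpl in Hd.
    replace (l * (w - z))%C with ((w - z) * l)%C by ring. exact Hd.
  - intros H. split; [apply is_linear_scal_l|].
    intros x Hx.
    apply (@is_filter_lim_locally_unique C_AbsRing (AbsRing_NormedModule C_AbsRing)) in Hx.
    subst x. intros eps. destruct (H eps (cond_pos eps)) as [d [Hd Hw]].
    exists (mkposreal d Hd). intros w Hb. specialize (Hw w Hb).
    change (Cmod (g w - g z - (w - z) * l) <= eps * Cmod (w - z)).
    replace ((w - z) * l)%C with (l * (w - z))%C by ring. exact Hw.
Qed.

(** Coquelicot's product and chain rules are stated for [AbsRing_NormedModule C_AbsRing],
    while [holo_disc] uses [C_NormedModule]. *)
Lemma is_derive_C_abs (g : C -> C) (z : C) (l : C) :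
  @is_derive C_AbsRing C_NormedModule g z l <->
  @is_derive C_AbsRing (AbsRing_NormedModule C_AbsRing) g z l.
Proof.
  split.
  - intros [_ Hl]. split; [apply is_linear_scal_l|].
    intros x Hx.
    apply (@is_filter_lim_locally_unique C_AbsRing (AbsRing_NormedModule C_AbsRing)) in Hx.
    subst x. intros eps. destruct (Hl z (fun P H => H) eps) as [d Hd].
    exists d. intros w Hw. exact (Hd w Hw).
  - intros [_ Hl]. apply is_derive_C_eps. intros eps Heps.
    destruct (Hl z (fun P H => H) (mkposreal eps Heps)) as [d Hd].
    exists d. split; [apply cond_pos|]. intros w Hw.
    specialize (Hd w Hw). simpl in Hd.
    replace (l * (w - z))%C with ((w - z) * l)%C by ring. exact Hd.
Qed.

Definition Ccontinuous_at (g : C -> C) (z0 : C) : Prop :=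
  forall eps, 0 < eps -> exists d, 0 < d /\
    forall z, Cmod (z - z0) < d -> Cmod (g z - g z0) < eps.

Definition Ccontinuous_on_disc (g : C -> C) : Prop :=
  forall z, in_disc z -> Ccontinuous_at g z.

Lemma ex_derive_C_continuous (g : C -> C) (z0 : C) :
  @ex_derive C_AbsRing C_NormedModule g z0 -> Ccontinuous_at g z0.
Proof.
  intros [l Hl] eps Heps. destruct (proj1 (is_derive_C_eps g z0 l) Hl 1 Rlt_0_1) as [d [Hd Hw]].
  pose proof (Cmod_ge_0 l).
  exists (Rmin d (eps / (Cmod l + 2))). split.
  { apply Rmin_pos; [lra|]. apply Rdiv_lt_0_compat; lra. }
  intros z Hz. specialize (Hw z (Rlt_le_trans _ _ _ Hz (Rmin_l _ _))).
  assert (Hz' : Cmod (z - z0) * (Cmod l + 2) < eps).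
  { apply (Rmult_lt_compat_r (Cmod l + 2)) in Hz; [|lra].
    eapply Rlt_le_trans; [exact Hz|].
    apply Rle_trans with (eps / (Cmod l + 2) * (Cmod l + 2)).
    - apply Rmult_le_compat_r; [lra|apply Rmin_r].
    - right; field; lra. }
  replace (g z - g z0)%C with ((g z - g z0 - l * (z - z0)) + l * (z - z0))%C by ring.
  eapply Rle_lt_trans; [apply Cmod_triangle|]. rewrite Cmod_mult.
  pose proof (Cmod_ge_0 (z - z0)). nra.
Qed.

Lemma holo_disc_continuous (g : C -> C) : holo_disc g -> Ccontinuous_on_disc g.
Proof. intros Hg z Hz. exact (ex_derive_C_continuous g z (Hg z Hz)). Qed.

Lemma is_derive_Cinv (y : C) : y <> 0%C ->
  @is_derive C_AbsRing C_NormedModule Cinv y (- / (y * y))%C.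
Proof.
  intros Hy. apply is_derive_C_eps. intros eps Heps.
  set (m := Cmod y). assert (Hm : 0 < m) by (apply Cmod_gt_0; exact Hy).
  exists (Rmin (m / 2) (eps * (m * m * m) / 2)). split.
  { apply Rmin_pos; [lra|]. apply Rdiv_lt_0_compat; [|lra]. 
    repeat apply Rmult_lt_0_compat; lra. }
  intros w Hw. set (e := Cmod (w - y)) in *.
  assert (He1 : e < m / 2) by exact (Rlt_le_trans _ _ _ Hw (Rmin_l _ _)).
  assert (He2 : e < eps * (m * m * m) / 2) by exact (Rlt_le_trans _ _ _ Hw (Rmin_r _ _)).
  assert (He : 0 <= e) by apply Cmod_ge_0.
  assert (Hwm : m / 2 <= Cmod w).
  { assert (m <= Cmod w + e); [|lra].
    unfold m, e. replace y with (w - (w - y))%C at 1 by ring.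
    eapply Rle_trans; [apply Cmod_triangle|]. rewrite Cmod_opp. lra. }
  assert (Hw0 : w <> 0%C) by (apply Cmod_gt_0; lra).
  replace (/ w - / y - - / (y * y) * (w - y))%C with ((w - y) * (w - y) / (w * (y * y)))%C
    by (field; split; assumption).
  rewrite Cmod_div by (repeat apply Cmult_neq_0; assumption).
  rewrite !Cmod_mult. fold e m.
  assert (Hden : 0 < Cmod w * (m * m)) by (apply Rmult_lt_0_compat; nra).
  apply (Rmult_le_reg_r (Cmod w * (m * m))); [exact Hden|].
  unfold Rdiv. rewrite Rmult_assoc, Rinv_l, Rmult_1_r by lra.
  assert (e * e <= e * (eps * (m * m * m) / 2)) by (apply Rmult_le_compat_l; lra).
  assert (0 <= eps * e * (Cmod w - m / 2) * (m * m)) by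
    (repeat apply Rmult_le_pos; nra).
  nra.
Qed.

Lemma Ccontinuous_at_minus (g h : C -> C) (z0 : C) :
  Ccontinuous_at g z0 -> Ccontinuous_at h z0 -> Ccontinuous_at (fun w => g w - h w)%C z0.
Proof.
  intros Hg Hh eps Heps.
  destruct (Hg (eps / 2)) as [d1 [Hd1 K1]]; [lra|].
  destruct (Hh (eps / 2)) as [d2 [Hd2 K2]]; [lra|].
  exists (Rmin d1 d2). split; [apply Rmin_pos; assumption|].
  intros z Hz. specialize (K1 z (Rlt_le_trans _ _ _ Hz (Rmin_l _ _))).
  specialize (K2 z (Rlt_le_trans _ _ _ Hz (Rmin_r _ _))).
  replace (g z - h z - (g z0 - h z0))%C with ((g z - g z0) + - (h z - h z0))%C by ring.
  eapply Rle_lt_trans; [apply Cmod_triangle|]. rewrite Cmod_opp. lra.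
Qed.

Lemma Ccontinuous_at_affine (al be z0 : C) : Ccontinuous_at (fun w => al + be * w)%C z0.
Proof.
  intros eps Heps. pose proof (Cmod_ge_0 be).
  exists (eps / (Cmod be + 1)). split; [apply Rdiv_lt_0_compat; lra|].
  intros z Hz. replace (al + be * z - (al + be * z0))%C with (be * (z - z0))%C by ring.
  rewrite Cmod_mult. pose proof (Cmod_ge_0 (z - z0)).
  apply (Rmult_lt_compat_r (Cmod be + 1)) in Hz; [|lra].
  replace (eps / (Cmod be + 1) * (Cmod be + 1)) with eps in Hz by (field; lra). nra.
Qed.

Definition seg (a b : C) (s : R) : C := (a + RtoC s * (b - a))%C.

Definition seg_integrand (g : C -> C) (a b : C) (s : R) : C := (g (seg a b s) * (b - a))%C.

Definition line_int (g : C -> C) (a b : C) : C :=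
  RInt (V := C_R_CompleteNormedModule) (seg_integrand g a b) 0 1.

Lemma Cmod_seg_le (a b : C) (s M : R) :
  Cmod a <= M -> Cmod b <= M -> 0 <= s <= 1 -> Cmod (seg a b s) <= M.
Proof.
  intros Ha Hb Hs. unfold seg.
  replace (a + RtoC s * (b - a))%C with (RtoC (1 - s) * a + RtoC s * b)%C by C_field.
  eapply Rle_trans; [apply Cmod_triangle|].
  rewrite !Cmod_RtoC_mul by lra. nra.
Qed.

Lemma seg_in_disc (a b : C) (s : R) :
  in_disc a -> in_disc b -> 0 <= s <= 1 -> in_disc (seg a b s).
Proof.
  unfold in_disc. intros Ha Hb Hs.
  eapply Rle_lt_trans; [apply (Cmod_seg_le a b s (Rmax (Cmod a) (Cmod b)))|].
  - apply Rmax_l.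
  - apply Rmax_r.
  - exact Hs.
  - apply Rmax_lub_lt; assumption.
Qed.

Lemma seg_sub (a b : C) (y s : R) : (seg a b y - seg a b s = RtoC (y - s) * (b - a))%C.
Proof. unfold seg. C_field. Qed.

Lemma seg_sub_center (a b p : C) (s : R) : (seg a b s - p = seg (a - p) (b - p) s)%C.
Proof. unfold seg. C_field. Qed.

Lemma continuous_C_R_eps (h : R -> C) (x : R) :
  (forall eps, 0 < eps -> exists d, 0 < d /\
     forall y, Rabs (y - x) < d -> Cmod (h y - h x) < eps) ->
  @continuous R_UniformSpace C_R_CompleteNormedModule h x.
Proof.
  intros H. apply (@filterlim_locally_ball_norm R_AbsRing R C_R_NormedModule).
  apply locally_filter. intros eps.
  destruct (H eps (cond_pos eps)) as [d [Hd Hy]].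
  exists (mkposreal d Hd). intros y Hb. unfold ball_norm.
  rewrite norm_C_R, minus_C_R. exact (Hy y Hb).
Qed.

Lemma continuous_seg_integrand (g : C -> C) (a b : C) (s : R) :
  Ccontinuous_at g (seg a b s) ->
  @continuous R_UniformSpace C_R_CompleteNormedModule (seg_integrand g a b) s.
Proof.
  intros Hg. apply continuous_C_R_eps. intros eps Heps.
  set (K := Cmod (b - a) + 1).
  assert (HK : 0 < K) by (pose proof (Cmod_ge_0 (b - a)); unfold K; lra).
  destruct (Hg (eps / K)) as [d [Hd Hz]]; [apply Rdiv_lt_0_compat; assumption|].
  exists (d / K). split; [apply Rdiv_lt_0_compat; assumption|].
  intros y Hy. unfold seg_integrand.
  replace (g (seg a b y) * (b - a) - g (seg a b s) * (b - a))%C with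
    ((g (seg a b y) - g (seg a b s)) * (b - a))%C by ring.
  rewrite Cmod_mult.
  assert (Hseg : Cmod (seg a b y - seg a b s) < d).
  { rewrite seg_sub, Cmod_mult, Cmod_R.
    apply Rle_lt_trans with (Rabs (y - s) * K).
    - apply Rmult_le_compat_l; [apply Rabs_pos|unfold K; lra].
    - apply (Rmult_lt_compat_r K) in Hy; [|exact HK].
      replace (d / K * K) with d in Hy by (field; lra). exact Hy. }
  specialize (Hz _ Hseg).
  pose proof (Cmod_ge_0 (g (seg a b y) - g (seg a b s))).
  apply Rle_lt_trans with (Cmod (g (seg a b y) - g (seg a b s)) * K).
  - apply Rmult_le_compat_l; [lra|unfold K; lra].
  - apply (Rmult_lt_compat_r K) in Hz; [|exact HK].
    replace (eps / K * K) with eps in Hz by (field; lra). exact Hz.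
Qed.

Lemma ex_RInt_seg_integrand (g : C -> C) (a b : C) (u v : R) :
  Ccontinuous_on_disc g -> in_disc a -> in_disc b -> 0 <= u <= v -> v <= 1 ->
  @ex_RInt C_R_CompleteNormedModule (seg_integrand g a b) u v.
Proof.
  intros Hg Ha Hb Huv Hv. apply ex_RInt_continuous. intros s Hs.
  rewrite Rmin_left in Hs by lra. rewrite Rmax_right in Hs by lra.
  apply continuous_seg_integrand, Hg, seg_in_disc; [assumption|assumption|lra].
Qed.

Definition mid (a b : C) : C := (RtoC (/ 2) * (a + b))%C.

Lemma mid_in_disc (a b : C) : in_disc a -> in_disc b -> in_disc (mid a b).
Proof.
  intros Ha Hb. replace (mid a b) with (seg a b (/ 2)) by (unfold mid, seg; C_field).
  apply seg_in_disc; [assumption|assumption|lra].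
Qed.

Lemma line_int_midpoint (g : C -> C) (a b : C) :
  Ccontinuous_on_disc g -> in_disc a -> in_disc b ->
  line_int g a b = (line_int g a (mid a b) + line_int g (mid a b) b)%C.
Proof.
  intros Hg Ha Hb. unfold line_int.
  rewrite <- (RInt_Chasles (V := C_R_CompleteNormedModule) _ 0 (/ 2) 1)
    by (apply ex_RInt_seg_integrand; auto; lra).
  rewrite plus_C_R. f_equal.
  - assert (H := RInt_comp_lin (V := C_R_CompleteNormedModule)
                  (seg_integrand g a b) (/ 2) 0 0 1).
    rewrite Rmult_0_r, Rmult_1_r, !Rplus_0_r in H.
    rewrite <- H by (apply ex_RInt_seg_integrand; auto; lra).
    apply (RInt_ext (V := C_R_CompleteNormedModule)). intros x _.
    rewrite scal_C_R. unfold seg_integrand, seg, mid.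
    replace (a + RtoC x * (RtoC (/ 2) * (a + b) - a))%C
      with (a + RtoC (/ 2 * x + 0) * (b - a))%C by C_field.
    C_field.
  - assert (H := RInt_comp_lin (V := C_R_CompleteNormedModule)
                  (seg_integrand g a b) (/ 2) (/ 2) 0 1).
    replace (/ 2 * 1 + / 2) with 1 in H by field. rewrite Rmult_0_r, Rplus_0_l in H.
    rewrite <- H by (apply ex_RInt_seg_integrand; auto; lra).
    apply (RInt_ext (V := C_R_CompleteNormedModule)). intros x _.
    rewrite scal_C_R. unfold seg_integrand, seg, mid.
    replace (RtoC (/ 2) * (a + b) + RtoC x * (b - RtoC (/ 2) * (a + b)))%C
      with (a + RtoC (/ 2 * x + / 2) * (b - a))%C by C_field.
    C_field.
Qed.

Lemma line_int_swap (g : C -> C) (a b : C) :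
  Ccontinuous_on_disc g -> in_disc a -> in_disc b -> line_int g b a = (- line_int g a b)%C.
Proof.
  intros Hg Ha Hb. unfold line_int.
  assert (E : @ex_RInt C_R_CompleteNormedModule (seg_integrand g a b) 0 1)
    by (apply ex_RInt_seg_integrand; auto; lra).
  change (Copp ?x) with (@opp C_R_CompleteNormedModule x).
  rewrite (opp_RInt_swap (V := C_R_CompleteNormedModule) _ 0 1 E).
  assert (H := RInt_comp_lin (V := C_R_CompleteNormedModule) (seg_integrand g a b) (-1) 1 0 1).
  replace (-1 * 0 + 1) with 1 in H by ring. replace (-1 * 1 + 1) with 0 in H by ring.
  rewrite <- H by (apply ex_RInt_swap, E).
  apply (RInt_ext (V := C_R_CompleteNormedModule)). intros x _.
  rewrite scal_C_R. unfold seg_integrand, seg.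
  replace (b + RtoC x * (a - b))%C with (a + RtoC (-1 * x + 1) * (b - a))%C by C_field.
  C_field.
Qed.

Lemma line_int_minus (g h : C -> C) (a b : C) :
  Ccontinuous_on_disc g -> Ccontinuous_on_disc h -> in_disc a -> in_disc b ->
  line_int (fun w => g w - h w)%C a b = (line_int g a b - line_int h a b)%C.
Proof.
  intros Hg Hh Ha Hb. unfold line_int.
  transitivity (RInt (V := C_R_CompleteNormedModule) (fun s =>
    @minus C_R_CompleteNormedModule (seg_integrand g a b s) (seg_integrand h a b s)) 0 1).
  - apply (RInt_ext (V := C_R_CompleteNormedModule)). intros x _.
    unfold seg_integrand. change (@minus C_R_CompleteNormedModule ?x ?y) with (x - y)%C. C_field.
  - apply (RInt_minus (V := C_R_CompleteNormedModule)); apply ex_RInt_seg_integrand; auto; lra.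
Qed.

Lemma is_RInt_id_scal (w : C) :
  is_RInt (V := C_R_CompleteNormedModule) (fun s => scal s w) 0 1 (RtoC (/ 2) * w)%C.
Proof.
  replace (RtoC (/ 2) * w)%C with (minus (scal (1 * 1 / 2) w) (scal (0 * 0 / 2) w))
    by (rewrite minus_C_R, !scal_C_R; C_field).
  apply (is_RInt_derive (V := C_R_CompleteNormedModule) (fun s => scal (s * s / 2) w)).
  - intros x _.
    apply (is_derive_scal_l (K := R_AbsRing) (V := C_R_NormedModule) (fun s => s * s / 2)).
    auto_derive; [exact I|field].
  - intros x _.
    apply (continuous_scal_l (U := R_UniformSpace) (K := R_AbsRing) (V := C_R_NormedModule)).
    apply continuous_id.
Qed.

Lemma line_int_affine (al be a b : C) :
  line_int (fun w => al + be * w)%C a b = (al * (b - a) + RtoC (/ 2) * be * (b * b - a * a))%C.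
Proof.
  unfold line_int.
  transitivity (RInt (V := C_R_CompleteNormedModule)
    (fun s => @plus C_R_CompleteNormedModule (scal s (be * (b - a) * (b - a))%C)
                                             ((al + be * a) * (b - a))%C) 0 1).
  - apply (RInt_ext (V := C_R_CompleteNormedModule)). intros x _.
    rewrite plus_C_R, scal_C_R. unfold seg_integrand, seg. C_field.
  - rewrite (RInt_plus (V := C_R_CompleteNormedModule)).
    + rewrite (is_RInt_unique _ _ _ _ (is_RInt_id_scal _)), RInt_const, plus_C_R, scal_C_R.
      C_field.
    + eexists. apply is_RInt_id_scal.
    + apply ex_RInt_const.
Qed.

Lemma norm_line_int_le (g : C -> C) (a b : C) (phi : R -> R) (I : R) :
  @ex_RInt C_R_CompleteNormedModule (seg_integrand g a b) 0 1 -> is_RInt phi 0 1 I ->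
  (forall s, 0 <= s <= 1 -> Cmod (g (seg a b s)) <= phi s) ->
  Cmod (line_int g a b) <= Cmod (b - a) * I.
Proof.
  intros Hex Hphi Hle. unfold line_int. rewrite <- norm_C_R.
  apply (norm_RInt_le (V := C_R_NormedModule) (seg_integrand g a b)
    (fun s => Cmod (b - a) * phi s) 0 1);
    [lra| |apply (RInt_correct (V := C_R_CompleteNormedModule)), Hex
          |apply (is_RInt_scal (V := R_NormedModule)), Hphi].
  intros x Hx. rewrite norm_C_R. unfold seg_integrand. rewrite Cmod_mult, Rmult_comm.
  apply Rmult_le_compat_l; [apply Cmod_ge_0|apply Hle; lra].
Qed.

Lemma norm_line_int_le_const (g : C -> C) (a b : C) (K : R) :
  @ex_RInt C_R_CompleteNormedModule (seg_integrand g a b) 0 1 ->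
  (forall s, 0 <= s <= 1 -> Cmod (g (seg a b s)) <= K) ->
  Cmod (line_int g a b) <= K * Cmod (b - a).
Proof.
  intros Hex Hle. rewrite Rmult_comm.
  apply (norm_line_int_le g a b (fun _ => K)); [exact Hex| |exact Hle].
  assert (H := is_RInt_const (V := R_NormedModule) 0 1 K).
  unfold scal in H; simpl in H; unfold mult in H; simpl in H.
  rewrite Rminus_0_r, Rmult_1_l in H.
  exact H.
Qed.

(** * Goursat's lemma *)

Record triangle := Triangle { tA : C; tB : C; tC : C }.

Definition tri_int (g : C -> C) (T : triangle) : C :=
  (line_int g (tA T) (tB T) + line_int g (tB T) (tC T) + line_int g (tC T) (tA T))%C.

Definition perimeter (T : triangle) : R :=
  Cmod (tB T - tA T) + Cmod (tC T - tB T) + Cmod (tA T - tC T).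

Definition tri_bounded (M : R) (T : triangle) : Prop :=
  Cmod (tA T) <= M /\ Cmod (tB T) <= M /\ Cmod (tC T) <= M.

Lemma tri_bounded_in_disc (M : R) (T : triangle) : tri_bounded M T -> M < 1 ->
  in_disc (tA T) /\ in_disc (tB T) /\ in_disc (tC T).
Proof. unfold tri_bounded, in_disc. lra. Qed.

Lemma perimeter_ge0 (T : triangle) : 0 <= perimeter T.
Proof.
  unfold perimeter. pose proof (Cmod_ge_0 (tB T - tA T)).
  pose proof (Cmod_ge_0 (tC T - tB T)). pose proof (Cmod_ge_0 (tA T - tC T)). lra.
Qed.

Lemma Cmod_sub_tA_le_perimeter (T : triangle) :
  Cmod (tB T - tA T) <= perimeter T /\ Cmod (tC T - tA T) <= perimeter T.
Proof.
  unfold perimeter. rewrite (Cmod_sub_sym (tC T) (tA T)).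
  pose proof (Cmod_ge_0 (tB T - tA T)).
  pose proof (Cmod_ge_0 (tC T - tB T)). pose proof (Cmod_ge_0 (tA T - tC T)). lra.
Qed.

Lemma tri_int_minus (g h : C -> C) (M : R) (T : triangle) :
  Ccontinuous_on_disc g -> Ccontinuous_on_disc h -> tri_bounded M T -> M < 1 ->
  tri_int (fun w => g w - h w)%C T = (tri_int g T - tri_int h T)%C.
Proof.
  intros Hg Hh HT HM. destruct (tri_bounded_in_disc M T HT HM) as [Ha [Hb Hc]].
  unfold tri_int. rewrite !line_int_minus by assumption. ring.
Qed.

Lemma tri_int_affine (al be : C) (T : triangle) : tri_int (fun w => al + be * w)%C T = 0%C.
Proof. unfold tri_int. rewrite !line_int_affine. ring. Qed.

Definition subtri1 (T : triangle) : triangle :=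
  Triangle (tA T) (mid (tA T) (tB T)) (mid (tC T) (tA T)).
Definition subtri2 (T : triangle) : triangle :=
  Triangle (mid (tA T) (tB T)) (tB T) (mid (tB T) (tC T)).
Definition subtri3 (T : triangle) : triangle :=
  Triangle (mid (tC T) (tA T)) (mid (tB T) (tC T)) (tC T).
Definition subtri4 (T : triangle) : triangle :=
  Triangle (mid (tA T) (tB T)) (mid (tB T) (tC T)) (mid (tC T) (tA T)).

Definition is_subtri (T T' : triangle) : Prop :=
  T' = subtri1 T \/ T' = subtri2 T \/ T' = subtri3 T \/ T' = subtri4 T.

Lemma tri_int_subdivide (g : C -> C) (M : R) (T : triangle) :
  Ccontinuous_on_disc g -> tri_bounded M T -> M < 1 ->
  tri_int g T = (tri_int g (subtri1 T) + tri_int g (subtri2 T)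
                 + tri_int g (subtri3 T) + tri_int g (subtri4 T))%C.
Proof.
  intros Hg HT HM. destruct (tri_bounded_in_disc M T HT HM) as [Ha [Hb Hc]].
  destruct T as [a b c]. unfold tri_int, subtri1, subtri2, subtri3, subtri4; simpl in *.
  pose proof (mid_in_disc a b Ha Hb). pose proof (mid_in_disc b c Hb Hc).
  pose proof (mid_in_disc c a Hc Ha).
  rewrite (line_int_midpoint g a b), (line_int_midpoint g b c), (line_int_midpoint g c a)
    by assumption.
  rewrite (line_int_swap g (mid a b) (mid c a)), (line_int_swap g (mid a b) (mid b c)),
    (line_int_swap g (mid b c) (mid c a)) by assumption.
  ring.
Qed.

Lemma Cmod_half (z : C) : Cmod (RtoC (/ 2) * z) = Cmod z / 2.
Proof. rewrite Cmod_RtoC_mul by lra. field. Qed.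

Lemma is_subtri_props (M : R) (T T' : triangle) : tri_bounded M T -> is_subtri T T' ->
  tri_bounded M T' /\ perimeter T' = perimeter T / 2 /\ Cmod (tA T' - tA T) <= perimeter T.
Proof.
  intros HT HT'. destruct T as [a b c]. unfold tri_bounded, perimeter in *; simpl in *.
  assert (Hmid : forall x y, Cmod x <= M -> Cmod y <= M -> Cmod (mid x y) <= M).
  { intros x y Hx Hy. replace (mid x y) with (seg x y (/ 2)) by (unfold mid, seg; C_field).
    apply Cmod_seg_le; [assumption|assumption|lra]. }
  destruct HT as [Ha [Hb Hc]].
  pose proof (Cmod_ge_0 (b - a)). pose proof (Cmod_ge_0 (c - b)).
  pose proof (Cmod_ge_0 (a - c)).
  unfold is_subtri, subtri1, subtri2, subtri3, subtri4 in HT'.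
  destruct HT' as [-> | [-> | [-> | ->]]]; simpl; (split; [repeat split; auto|]).
  - replace (mid a b - a)%C with (RtoC (/ 2) * (b - a))%C by (unfold mid; C_field).
    replace (mid c a - mid a b)%C with (RtoC (/ 2) * (c - b))%C by (unfold mid; C_field).
    replace (a - mid c a)%C with (RtoC (/ 2) * (a - c))%C by (unfold mid; C_field).
    replace (a - a)%C with (RtoC 0) by ring.
    rewrite !Cmod_half, Cmod_0. lra.
  - replace (b - mid a b)%C with (RtoC (/ 2) * (b - a))%C by (unfold mid; C_field).
    replace (mid b c - b)%C with (RtoC (/ 2) * (c - b))%C by (unfold mid; C_field).
    replace (mid a b - mid b c)%C with (RtoC (/ 2) * (a - c))%C by (unfold mid; C_field).
    replace (mid a b - a)%C with (RtoC (/ 2) * (b - a))%C by (unfold mid; C_field).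
    rewrite !Cmod_half. lra.
  - replace (mid b c - mid c a)%C with (RtoC (/ 2) * (b - a))%C by (unfold mid; C_field).
    replace (c - mid b c)%C with (RtoC (/ 2) * (c - b))%C by (unfold mid; C_field).
    replace (mid c a - c)%C with (RtoC (/ 2) * (a - c))%C by (unfold mid; C_field).
    replace (mid c a - a)%C with (RtoC (/ 2) * - (a - c))%C by (unfold mid; C_field).
    rewrite !Cmod_half, Cmod_opp. lra.
  - replace (mid b c - mid a b)%C with (RtoC (/ 2) * - (a - c))%C by (unfold mid; C_field).
    replace (mid c a - mid b c)%C with (RtoC (/ 2) * - (b - a))%C by (unfold mid; C_field).
    replace (mid a b - mid c a)%C with (RtoC (/ 2) * - (c - b))%C by (unfold mid; C_field).
    replace (mid a b - a)%C with (RtoC (/ 2) * (b - a))%C by (unfold mid; C_field).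
    rewrite !Cmod_half, !Cmod_opp. lra.
Qed.

Definition step (g : C -> C) (T : triangle) : triangle :=
  let q := Cmod (tri_int g T) / 4 in
  if Rle_dec q (Cmod (tri_int g (subtri1 T))) then subtri1 T
  else if Rle_dec q (Cmod (tri_int g (subtri2 T))) then subtri2 T
  else if Rle_dec q (Cmod (tri_int g (subtri3 T))) then subtri3 T
  else subtri4 T.

Lemma step_is_subtri (g : C -> C) (T : triangle) : is_subtri T (step g T).
Proof.
  unfold step, is_subtri. repeat destruct Rle_dec; auto.
Qed.

Lemma tri_int_step_ge (g : C -> C) (M : R) (T : triangle) :
  Ccontinuous_on_disc g -> tri_bounded M T -> M < 1 ->
  Cmod (tri_int g T) <= 4 * Cmod (tri_int g (step g T)).
Proof.
  intros Hg HT HM. unfold step; cbv zeta.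
  destruct Rle_dec; [lra|]. destruct Rle_dec; [lra|]. destruct Rle_dec; [lra|].
  rewrite (tri_int_subdivide g M T Hg HT HM) in *.
  pose proof (Cmod_triangle (tri_int g (subtri1 T) + tri_int g (subtri2 T)
                             + tri_int g (subtri3 T)) (tri_int g (subtri4 T))).
  pose proof (Cmod_triangle (tri_int g (subtri1 T) + tri_int g (subtri2 T))
                            (tri_int g (subtri3 T))).
  pose proof (Cmod_triangle (tri_int g (subtri1 T)) (tri_int g (subtri2 T))).
  lra.
Qed.

Definition nested (g : C -> C) (T : triangle) (n : nat) : triangle := Nat.iter n (step g) T.

Lemma nested_props (g : C -> C) (M : R) (T : triangle) :
  Ccontinuous_on_disc g -> tri_bounded M T -> M < 1 -> forall n,
  tri_bounded M (nested g T n) /\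
  2 ^ n * perimeter (nested g T n) = perimeter T /\
  Cmod (tri_int g T) <= 4 ^ n * Cmod (tri_int g (nested g T n)) /\
  2 ^ n * Cmod (tA (nested g T (S n)) - tA (nested g T n)) <= perimeter T.
Proof.
  intros Hg HT HM n. induction n as [|n [Hb [Hp [Hi _]]]].
  - destruct (is_subtri_props M T _ HT (step_is_subtri g T)) as [_ [_ H]].
    change (nested g T 0) with T. change (nested g T 1) with (step g T).
    rewrite pow_O, !Rmult_1_l. repeat split; try apply HT; lra.
  - change (nested g T (S n)) with (step g (nested g T n)).
    change (nested g T (S (S n))) with (step g (step g (nested g T n))).
    destruct (is_subtri_props M _ _ Hb (step_is_subtri g (nested g T n)))
      as [Hb1 [Hp1 _]].
    destruct (is_subtri_props M _ _ Hb1 (step_is_subtri g (step g (nested g T n))))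
      as [_ [_ Hv]].
    pose proof (tri_int_step_ge g M _ Hg Hb HM).
    pose proof (pow_lt 2 n ltac:(lra)). pose proof (pow_lt 4 n ltac:(lra)).
    simpl pow. split; [exact Hb1|]. rewrite Hp1.
    split; [lra|]. split; [nra|].
    apply Rle_trans with (2 * 2 ^ n * perimeter (step g (nested g T n))); [|rewrite Hp1; lra].
    apply Rmult_le_compat_l; lra.
Qed.

Lemma exists_pow2_gt (K : R) : exists n, K < 2 ^ n.
Proof.
  destruct (Pow_x_infinity 2 ltac:(rewrite Rabs_pos_eq; lra) (K + 1)) as [N HN].
  exists N. specialize (HN N (Nat.le_refl N)). rewrite Rabs_pos_eq in HN.
  - unfold Rge in HN. lra.
  - apply pow_le. lra.
Qed.

Lemma le_of_pow2_mul_sub_le (x y K : R) : (forall n, 2 ^ n * (x - y) <= K) -> x <= y.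
Proof.
  intros H. destruct (Rle_dec x y) as [Hle|Hgt]; [exact Hle|].
  destruct (exists_pow2_gt (K / (x - y))) as [n Hn].
  specialize (H n).
  apply (Rmult_lt_compat_r (x - y)) in Hn; [|lra].
  replace (K / (x - y) * (x - y)) with K in Hn by (field; lra). lra.
Qed.

Lemma geometric_tail_le (x : nat -> R) (K : R) :
  (forall n, 2 ^ n * Rabs (x (S n) - x n) <= K) ->
  forall n m, (n <= m)%nat -> Rabs (x m - x n) <= 2 * K / 2 ^ n.
Proof.
  intros Hx.
  assert (Htail : forall n k, 2 ^ n * Rabs (x (n + k)%nat - x n) <= 2 * K * (1 - / 2 ^ k)).
  { intros n k. induction k as [|k IHk].
    - rewrite Nat.add_0_r, Rminus_diag, Rabs_R0, pow_O, Rinv_1. lra.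
    - rewrite Nat.add_succ_r.
      pose proof (pow_lt 2 n ltac:(lra)). pose proof (pow_lt 2 k ltac:(lra)).
      assert (Hstep : 2 ^ n * Rabs (x (S (n + k)) - x (n + k)%nat) <= K * / 2 ^ k).
      { apply (Rmult_le_reg_l (2 ^ k)); [lra|].
        replace (2 ^ k * (K * / 2 ^ k)) with K by (field; lra).
        specialize (Hx (n + k)%nat). rewrite pow_add in Hx. lra. }
      pose proof (Rabs_triang (x (S (n + k)) - x (n + k)%nat) (x (n + k)%nat - x n)) as Htri.
      replace (x (S (n + k)) - x (n + k)%nat + (x (n + k)%nat - x n))
        with (x (S (n + k)) - x n) in Htri by ring.
      replace (2 * K * (1 - / 2 ^ S k)) with (2 * K * (1 - / 2 ^ k) + K * / 2 ^ k)
        by (simpl pow; field; lra).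
      nra. }
  intros n m Hnm. replace m with (n + (m - n))%nat by lia.
  pose proof (pow_lt 2 n ltac:(lra)).
  apply (Rmult_le_reg_l (2 ^ n)); [lra|].
  replace (2 ^ n * (2 * K / 2 ^ n)) with (2 * K) by (field; lra).
  pose proof (Htail n (m - n)%nat).
  assert (HK : 0 <= K).
  { specialize (Hx O). pose proof (Rabs_pos (x 1%nat - x O)). simpl in Hx. lra. }
  pose proof (Rinv_0_lt_compat _ (pow_lt 2 (m - n) ltac:(lra))). nra.
Qed.

Lemma real_geometric_cauchy (x : nat -> R) (K : R) :
  (forall n, 2 ^ n * Rabs (x (S n) - x n) <= K) ->
  exists l, forall n, 2 ^ n * Rabs (l - x n) <= 2 * K.
Proof.
  intros Hx. pose proof (geometric_tail_le x K Hx) as Hbound.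
  destruct (proj2 (ex_lim_seq_cauchy_corr x)) as [l Hl].
  - intros eps. destruct (exists_pow2_gt (4 * K / eps)) as [N HN].
    exists N. intros n m Hn Hm.
    pose proof (cond_pos eps). pose proof (pow_lt 2 N ltac:(lra)).
    assert (Hsmall : 2 * K / 2 ^ N < eps / 2).
    { apply (Rmult_lt_reg_r (2 ^ N * 2 / eps)).
      - apply Rdiv_lt_0_compat; lra.
      - replace (2 * K / 2 ^ N * (2 ^ N * 2 / eps)) with (4 * K / eps) by (field; lra).
        replace (eps / 2 * (2 ^ N * 2 / eps)) with (2 ^ N) by (field; lra). exact HN. }
    pose proof (Hbound N n Hn). pose proof (Hbound N m Hm).
    replace (x n - x m) with ((x n - x N) - (x m - x N)) by ring.
    eapply Rle_lt_trans; [apply Rabs_triang|]. rewrite Rabs_Ropp. lra.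
  - exists l. intros n. pose proof (pow_lt 2 n ltac:(lra)).
    apply (Rmult_le_reg_l (/ 2 ^ n)); [apply Rinv_0_lt_compat; lra|].
    rewrite <- Rmult_assoc, Rinv_l, Rmult_1_l by lra.
    rewrite Rmult_comm. fold (2 * K / 2 ^ n).
    exact (is_lim_seq_le_loc (fun m => Rabs (x m - x n)) (fun _ => 2 * K / 2 ^ n)
             (Finite (Rabs (l - x n))) (Finite (2 * K / 2 ^ n))
             (ex_intro _ n (Hbound n))
             (is_lim_seq_abs _ (Finite (l - x n))
                (is_lim_seq_minus' _ _ _ _ Hl (is_lim_seq_const (x n))))
             (is_lim_seq_const _)).
Qed.

Lemma complex_geometric_cauchy (u : nat -> C) (K : R) :
  (forall n, 2 ^ n * Cmod (u (S n) - u n) <= K) ->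
  exists p, forall n, 2 ^ n * Cmod (p - u n) <= 4 * K.
Proof.
  intros Hu.
  assert (Hcomp : forall n, Rabs (fst (u (S n) - u n)%C) <= Cmod (u (S n) - u n) /\
                            Rabs (snd (u (S n) - u n)%C) <= Cmod (u (S n) - u n)).
  { intros n. pose proof (Rmax_Cmod (u (S n) - u n)%C).
    pose proof (Rmax_l (Rabs (fst (u (S n) - u n)%C)) (Rabs (snd (u (S n) - u n)%C))).
    pose proof (Rmax_r (Rabs (fst (u (S n) - u n)%C)) (Rabs (snd (u (S n) - u n)%C))).
    lra. }
  destruct (real_geometric_cauchy (fun n => fst (u n)) K) as [lx Hlx].
  { intros n. pose proof (pow_lt 2 n ltac:(lra)). eapply Rle_trans; [|apply (Hu n)].
    apply Rmult_le_compat_l; [lra|apply (Hcomp n)]. }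
  destruct (real_geometric_cauchy (fun n => snd (u n)) K) as [ly Hly].
  { intros n. pose proof (pow_lt 2 n ltac:(lra)). eapply Rle_trans; [|apply (Hu n)].
    apply Rmult_le_compat_l; [lra|apply (Hcomp n)]. }
  exists (lx, ly). intros n. specialize (Hlx n). specialize (Hly n). simpl in Hlx, Hly.
  assert (Hsqrt2 : sqrt 2 <= 2).
  { rewrite <- (sqrt_square 2) at 2 by lra. apply sqrt_le_1_alt. lra. }
  set (m := Rmax (Rabs (lx - fst (u n))) (Rabs (ly - snd (u n)))).
  assert (Hmax : 2 ^ n * m <= 2 * K) by (apply Rmax_case; assumption).
  assert (H : Cmod ((lx, ly) - u n)%C <= sqrt 2 * m) by exact (Cmod_2Rmax _).
  pose proof (pow_lt 2 n ltac:(lra)).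
  assert (Hm : 0 <= m) by (eapply Rle_trans; [apply Rabs_pos|apply Rmax_l]).
  apply Rle_trans with (2 ^ n * (sqrt 2 * m)); [apply Rmult_le_compat_l; lra|].
  assert (0 <= (2 - sqrt 2) * (2 ^ n * m)) by (apply Rmult_le_pos; nra).
  nra.
Qed.

Definition tri_near (p : C) (rho : R) (T : triangle) : Prop :=
  Cmod (tA T - p) <= rho /\ Cmod (tB T - p) <= rho /\ Cmod (tC T - p) <= rho.

(** Subtracting the tangent affine map at [p], whose triangle integral vanishes. *)
Lemma norm_tri_int_le_local (g : C -> C) (p l : C) (eps d rho M : R) (T : triangle) :
  Ccontinuous_on_disc g -> tri_bounded M T -> M < 1 -> 0 <= eps ->
  (forall w, Cmod (w - p) < d -> Cmod (g w - g p - l * (w - p)) <= eps * Cmod (w - p)) ->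
  rho < d -> tri_near p rho T -> Cmod (tri_int g T) <= eps * rho * perimeter T.
Proof.
  intros Hg HT HM Heps Hd Hrho [Ha [Hb Hc]].
  set (A := (fun w => (g p - l * p) + l * w)%C).
  assert (HA : Ccontinuous_on_disc A) by (intros z _; apply Ccontinuous_at_affine).
  assert (HgA : Ccontinuous_on_disc (fun w => g w - A w)%C)
    by (intros z Hz; apply Ccontinuous_at_minus; [apply Hg, Hz|apply HA, Hz]).
  assert (Hedge : forall e1 e2, Cmod e1 <= M -> Cmod e2 <= M ->
            Cmod (e1 - p) <= rho -> Cmod (e2 - p) <= rho ->
            Cmod (line_int (fun w => g w - A w)%C e1 e2) <= eps * rho * Cmod (e2 - e1)).
  { intros e1 e2 He1 He2 Hp1 Hp2. apply norm_line_int_le_const.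
    - apply ex_RInt_seg_integrand; unfold in_disc; auto; lra.
    - intros s Hs. assert (Hw : Cmod (seg e1 e2 s - p) <= rho)
        by (rewrite seg_sub_center; apply Cmod_seg_le; assumption).
      replace (g (seg e1 e2 s) - A (seg e1 e2 s))%C
        with (g (seg e1 e2 s) - g p - l * (seg e1 e2 s - p))%C by (unfold A; ring).
      eapply Rle_trans; [apply Hd; lra|]. apply Rmult_le_compat_l; assumption. }
  replace (tri_int g T) with (tri_int (fun w => g w - A w)%C T)
    by (rewrite (tri_int_minus g A M T Hg HA HT HM); unfold A; rewrite tri_int_affine; ring).
  destruct HT as [HTa [HTb HTc]].
  unfold tri_int, perimeter.
  pose proof (Hedge _ _ HTa HTb Ha Hb). pose proof (Hedge _ _ HTb HTc Hb Hc).
  pose proof (Hedge _ _ HTc HTa Hc Ha).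
  eapply Rle_trans; [apply Cmod_triangle|].
  pose proof (Cmod_triangle (line_int (fun w => g w - A w)%C (tA T) (tB T))
                            (line_int (fun w => g w - A w)%C (tB T) (tC T))).
  lra.
Qed.

Lemma nested_limit_point (g : C -> C) (M : R) (T : triangle) :
  Ccontinuous_on_disc g -> tri_bounded M T -> M < 1 ->
  exists p, Cmod p <= M /\ forall n, tri_near p (5 * perimeter T / 2 ^ n) (nested g T n).
Proof.
  intros Hg HT HM. pose proof (nested_props g M T Hg HT HM) as HN.
  destruct (complex_geometric_cauchy (fun n => tA (nested g T n)) (perimeter T)) as [p Hp].
  { intros n. apply (HN n). }
  exists p. split.
  - apply (le_of_pow2_mul_sub_le _ _ (4 * perimeter T)). intros n.
    destruct (HN n) as [[HtA _] _]. specialize (Hp n).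
    pose proof (Cmod_sub_triangle p (tA (nested g T n)) 0) as Htri.
    rewrite !Cminus_0_r in Htri.
    pose proof (pow_lt 2 n ltac:(lra)). nra.
  - intros n. destruct (HN n) as [_ [Hper _]]. specialize (Hp n).
    set (Tn := nested g T n) in *. rewrite Cmod_sub_sym in Hp.
    pose proof (pow_lt 2 n ltac:(lra)).
    assert (Hv : forall v, Cmod (v - tA Tn) <= perimeter Tn ->
                           Cmod (v - p) <= 5 * perimeter T / 2 ^ n).
    { intros v Hv. apply (Rmult_le_reg_l (2 ^ n)); [lra|].
      replace (2 ^ n * (5 * perimeter T / 2 ^ n)) with (5 * perimeter T) by (field; lra).
      pose proof (Cmod_sub_triangle v (tA Tn) p). nra. }
    destruct (Cmod_sub_tA_le_perimeter Tn) as [HAB HAC].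
    split; [|split]; apply Hv; [|exact HAB|exact HAC].
    replace (tA Tn - tA Tn)%C with (RtoC 0) by ring. rewrite Cmod_0. apply perimeter_ge0.
Qed.

Lemma exists_tri_bounded_lt_1 (a b c : C) : in_disc a -> in_disc b -> in_disc c ->
  exists M, M < 1 /\ tri_bounded M (Triangle a b c).
Proof.
  intros Ha Hb Hc. exists (Rmax (Cmod a) (Rmax (Cmod b) (Cmod c))).
  split; [repeat apply Rmax_lub_lt; assumption|]. unfold tri_bounded; simpl. repeat split.
  - apply Rmax_l.
  - eapply Rle_trans; [apply Rmax_l|apply Rmax_r].
  - eapply Rle_trans; [apply Rmax_r|apply Rmax_r].
Qed.

Theorem goursat (g : C -> C) (a b c : C) :
  holo_disc g -> in_disc a -> in_disc b -> in_disc c -> tri_int g (Triangle a b c) = 0%C.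
Proof.
  intros Hh Ha Hb Hc. pose proof (holo_disc_continuous g Hh) as Hg.
  set (T := Triangle a b c). destruct (exists_tri_bounded_lt_1 a b c Ha Hb Hc) as [M [HM HT]].
  destruct (Req_dec (Cmod (tri_int g T)) 0) as [H0|Hnz]; [apply Cmod_eq_0, H0|exfalso].
  set (eta := Cmod (tri_int g T)).
  assert (Heta : 0 < eta) by (pose proof (Cmod_ge_0 (tri_int g T)); unfold eta; lra).
  destruct (nested_limit_point g M T Hg HT HM) as [p [HpM Hnear]].
  destruct (Hh p ltac:(unfold in_disc; lra)) as [l Hl].
  set (P := perimeter T + 1). pose proof (perimeter_ge0 T) as Hper0.
  set (eps := eta / (10 * P * P)).
  assert (Heps : 0 < eps) by (unfold eps, P; apply Rdiv_lt_0_compat; nra).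
  destruct (proj1 (is_derive_C_eps g p l) Hl eps Heps) as [d [Hd Hld]].
  destruct (exists_pow2_gt (5 * P / d)) as [n Hn].
  destruct (nested_props g M T Hg HT HM n) as [HTn [Hper [Hint _]]].
  pose proof (pow_lt 2 n ltac:(lra)) as H2n.
  assert (Hrho : 5 * perimeter T / 2 ^ n < d).
  { apply (Rmult_lt_reg_r (2 ^ n / d)); [apply Rdiv_lt_0_compat; lra|].
    replace (5 * perimeter T / 2 ^ n * (2 ^ n / d)) with (5 * perimeter T / d) by (field; lra).
    replace (d * (2 ^ n / d)) with (2 ^ n) by (field; lra).
    apply Rle_lt_trans with (5 * P / d); [|exact Hn].
    unfold Rdiv. apply Rmult_le_compat_r; [left; apply Rinv_0_lt_compat, Hd|unfold P; lra]. }
  pose proof (norm_tri_int_le_local g p l eps d _ M _ Hg HTn HM (Rlt_le _ _ Heps) Hld Hrho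
                (Hnear n)) as Hloc.
  replace (perimeter (nested g T n)) with (perimeter T / 2 ^ n) in Hloc
    by (rewrite <- Hper; field; lra).
  assert (Hbound : eta <= eta / 2 * (perimeter T / P) ^ 2).
  { eapply Rle_trans; [exact Hint|].
    eapply Rle_trans; [apply Rmult_le_compat_l; [apply pow_le; lra|exact Hloc]|].
    right. replace 4 with (2 * 2) by ring. rewrite Rpow_mult_distr. unfold eps, P.
    field. split; lra. }
  assert (Hratio : (perimeter T / P) ^ 2 < 1).
  { assert (0 <= perimeter T / P < 1).
    { split; [apply Rdiv_le_0_compat; unfold P; lra|].
      apply (Rmult_lt_reg_r P); [unfold P; lra|].
      unfold Rdiv. rewrite Rmult_assoc, Rinv_l by (unfold P; lra). unfold P; lra. }
    simpl. nra. }
  nra.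
Qed.

(** * Holomorphy of the Cesàro transform *)

Lemma Ccontinuous_at_const (c z0 : C) : Ccontinuous_at (fun _ => c) z0.
Proof.
  intros eps Heps. exists 1. split; [lra|]. intros z _.
  replace (c - c)%C with (RtoC 0) by ring. rewrite Cmod_0. exact Heps.
Qed.

Lemma line_int_const (c a b : C) : line_int (fun _ => c) a b = (c * (b - a))%C.
Proof.
  unfold line_int, seg_integrand. rewrite RInt_const, scal_C_R. C_field.
Qed.

Lemma is_derive_line_int_0 (g : C -> C) (z : C) : holo_disc g -> in_disc z ->
  @is_derive C_AbsRing C_NormedModule (fun w => line_int g 0 w) z (g z).
Proof.
  intros Hh Hz. pose proof (holo_disc_continuous g Hh) as Hg.
  apply is_derive_C_eps. intros eps Heps.
  destruct (Hg z Hz eps Heps) as [d [Hd Hc]].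
  exists (Rmin d (1 - Cmod z)). split; [apply Rmin_pos; unfold in_disc in Hz; lra|].
  intros w Hw. pose proof (Rlt_le_trans _ _ _ Hw (Rmin_l _ _)) as Hwd.
  assert (Hwz : in_disc w).
  { pose proof (Rlt_le_trans _ _ _ Hw (Rmin_r _ _)).
    pose proof (Cmod_triangle (w - z) z). replace (w - z + z)%C with w in H0 by ring.
    unfold in_disc. lra. }
  assert (Hgo := goursat g 0 z w Hh in_disc_0 Hz Hwz). unfold tri_int in Hgo; simpl in Hgo.
  rewrite (line_int_swap g 0 w Hg in_disc_0 Hwz) in Hgo.
  replace (line_int g 0 w - line_int g 0 z - g z * (w - z))%C
    with (line_int (fun u => g u - g z)%C z w).
  2:{ rewrite line_int_minus, line_int_const by
        (auto; intros ? _; apply Ccontinuous_at_const).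
      assert (E : line_int g z w = (line_int g 0 w - line_int g 0 z)%C).
      { apply Ceq_minus. etransitivity; [|exact Hgo]. ring. }
      rewrite E. ring. }
  apply norm_line_int_le_const.
  - apply ex_RInt_seg_integrand; [|assumption|assumption|lra|lra].
    intros u Hu. apply Ccontinuous_at_minus; [apply Hg, Hu|apply Ccontinuous_at_const].
  - intros s Hs. apply Rlt_le, Hc.
    rewrite seg_sub_center. replace (z - z)%C with (RtoC 0) by ring. unfold seg.
    rewrite Cminus_0_r, Cplus_0_l.
    rewrite Cmod_RtoC_mul by lra. pose proof (Cmod_ge_0 (w - z)). nra.
Qed.

Definition radial_mean (g : C -> C) (z : C) : C :=
  if Ceq_dec z 0 then g 0 else (line_int g 0 z / z)%C.

Lemma is_derive_radial_mean_0 (g : C -> C) (l : C) : holo_disc g ->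
  @is_derive C_AbsRing C_NormedModule g (RtoC 0) l ->
  @is_derive C_AbsRing C_NormedModule (radial_mean g) (RtoC 0) (RtoC (/ 2) * l)%C.
Proof.
  intros Hh Hl. pose proof (holo_disc_continuous g Hh) as Hg.
  apply is_derive_C_eps. intros eps Heps.
  destruct (proj1 (is_derive_C_eps g (RtoC 0) l) Hl eps Heps) as [d [Hd Hld]].
  setoid_rewrite Cminus_0_r in Hld.
  exists (Rmin d 1). split; [apply Rmin_pos; lra|].
  intros z Hz. rewrite Cminus_0_r in *.
  assert (Hzd : in_disc z) by (unfold in_disc; pose proof (Rmin_r d 1); lra).
  unfold radial_mean. destruct (Ceq_dec 0 0) as [_|]; [|congruence].
  destruct (Ceq_dec z 0) as [->|Hz0].
  { replace (g 0 - g 0 - RtoC (/ 2) * l * 0)%C with (RtoC 0) by ring.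
    rewrite Cmod_0. lra. }
  set (A := (fun w => g 0 + l * w)%C).
  replace (line_int g 0 z / z - g 0 - RtoC (/ 2) * l * z)%C
    with (line_int (fun w => g w - A w)%C 0 z / z)%C.
  2:{ rewrite line_int_minus by (auto using in_disc_0; intros ? _; apply Ccontinuous_at_affine).
      unfold A. rewrite line_int_affine. field. exact Hz0. }
  assert (Hzp : 0 < Cmod z) by (apply Cmod_gt_0; exact Hz0).
  rewrite Cmod_div by exact Hz0.
  apply (Rmult_le_reg_r (Cmod z)); [exact Hzp|].
  unfold Rdiv. rewrite Rmult_assoc, Rinv_l, Rmult_1_r by lra.
  rewrite <- (Cminus_0_r z) at 3. apply norm_line_int_le_const.
  - apply ex_RInt_seg_integrand; [|apply in_disc_0|assumption|lra|lra].
    intros u Hu. apply Ccontinuous_at_minus; [apply Hg, Hu|apply Ccontinuous_at_affine].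
  - intros s Hs. unfold seg, A. rewrite Cminus_0_r, Cplus_0_l.
    assert (Hsz : Cmod (RtoC s * z) <= Cmod z) by (rewrite Cmod_RtoC_mul by lra; nra).
    replace (g (RtoC s * z) - (g 0 + l * (RtoC s * z)))%C
      with (g (RtoC s * z) - g 0 - l * (RtoC s * z))%C by ring.
    eapply Rle_trans; [apply Hld; pose proof (Rmin_l d 1); lra|].
    apply Rmult_le_compat_l; lra.
Qed.

Lemma holo_disc_radial_mean (g : C -> C) : holo_disc g -> holo_disc (radial_mean g).
Proof.
  intros Hh z Hz. destruct (Ceq_dec z 0) as [->|Hz0].
  { destruct (Hh 0 in_disc_0) as [l Hl]. eexists. exact (is_derive_radial_mean_0 g l Hh Hl). }
  assert (H1 := proj1 (is_derive_C_abs _ _ _) (is_derive_line_int_0 g z Hh Hz)).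
  assert (H2 := proj1 (is_derive_C_abs _ _ _) (is_derive_Cinv z Hz0)).
  assert (H3 := is_derive_mult (K := C_AbsRing) _ _ z _ _ H1 H2 Cmult_comm).
  eexists. apply is_derive_C_abs.
  apply (is_derive_ext_loc (K := C_AbsRing) (V := AbsRing_NormedModule C_AbsRing)
           (fun w => mult (line_int g 0 w) (Cinv w)) (radial_mean g) z _); [|exact H3].
  assert (Hzp : 0 < Cmod z) by (apply Cmod_gt_0; exact Hz0).
  exists (mkposreal _ Hzp). intros w Hw. change (Cmod (w - z) < Cmod z) in Hw.
  unfold radial_mean. destruct (Ceq_dec w 0) as [->|_]; [|reflexivity].
  exfalso. rewrite Cmod_sub_sym, Cminus_0_r in Hw. lra.
Qed.

Definition cesaro_integrand (t : R) (f : C -> C) (w : C) : C := (f w / (1 - RtoC t * w))%C.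

Lemma Cmod_one_sub_ge (t : R) (w : C) : 1 - Rabs t * Cmod w <= Cmod (1 - RtoC t * w).
Proof.
  pose proof (Cmod_triangle (1 - RtoC t * w) (RtoC t * w)).
  replace (1 - RtoC t * w + RtoC t * w)%C with (RtoC 1) in H by ring.
  rewrite Cmod_1, Cmod_mult, Cmod_R in H. lra.
Qed.

Lemma one_sub_mul_neq0 (t : R) (w : C) : Rabs t <= 1 -> in_disc w -> (1 - RtoC t * w)%C <> 0%C.
Proof.
  intros Ht Hw E. pose proof (Cmod_one_sub_ge t w). rewrite E, Cmod_0 in H.
  unfold in_disc in Hw. pose proof (Cmod_ge_0 w). pose proof (Rabs_pos t). nra.
Qed.

Lemma is_derive_one_sub_mul (t : R) (w : C) :
  @is_derive C_AbsRing C_NormedModule (fun x => 1 - RtoC t * x)%C w (- RtoC t)%C.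
Proof.
  apply is_derive_C_eps. intros eps Heps. exists 1. split; [lra|]. intros z _.
  replace (1 - RtoC t * z - (1 - RtoC t * w) - - RtoC t * (z - w))%C with (RtoC 0) by ring.
  rewrite Cmod_0. pose proof (Cmod_ge_0 (z - w)). nra.
Qed.

Lemma holo_disc_cesaro_integrand (t : R) (f : C -> C) :
  Rabs t <= 1 -> holo_disc f -> holo_disc (cesaro_integrand t f).
Proof.
  intros Ht Hf w Hw. destruct (Hf w Hw) as [df Hdf].
  assert (Hinv := is_derive_comp (K := C_AbsRing) (V := AbsRing_NormedModule C_AbsRing)
    Cinv (fun x => 1 - RtoC t * x)%C w _ _
    (proj1 (is_derive_C_abs _ _ _) (is_derive_Cinv _ (one_sub_mul_neq0 t w Ht Hw)))
    (proj1 (is_derive_C_abs _ _ _) (is_derive_one_sub_mul t w))).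
  eexists. apply is_derive_C_abs.
  exact (is_derive_mult (K := C_AbsRing) f _ w _ _
    (proj1 (is_derive_C_abs _ _ _) Hdf) Hinv Cmult_comm).
Qed.

Lemma cesaro_eq_radial_mean (t : R) (f : C -> C) (z : C) :
  cesaro t f z = radial_mean (cesaro_integrand t f) z.
Proof.
  unfold cesaro, radial_mean. destruct (Ceq_dec z 0) as [->|Hz].
  - unfold cesaro_integrand. replace (1 - RtoC t * 0)%C with (RtoC 1) by ring. field.
  - f_equal. unfold line_int. apply (RInt_ext (V := C_R_CompleteNormedModule)).
    intros s _. unfold seg_integrand, seg, cesaro_integrand.
    rewrite !Cminus_0_r, Cplus_0_l. reflexivity.
Qed.

Lemma holo_disc_cesaro (t : R) (f : C -> C) :
  Rabs t <= 1 -> holo_disc f -> holo_disc (cesaro t f).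
Proof.
  intros Ht Hf z Hz.
  destruct (holo_disc_radial_mean _ (holo_disc_cesaro_integrand t f Ht Hf) z Hz) as [l Hl].
  exists l. apply (is_derive_ext (K := C_AbsRing) (V := C_NormedModule)
                     (radial_mean (cesaro_integrand t f))); [|exact Hl].
  intros w. symmetry. apply cesaro_eq_radial_mean.
Qed.

Lemma Rpower_1_base (a : R) : Rpower 1 a = 1.
Proof. unfold Rpower. rewrite ln_1, Rmult_0_r. apply exp_0. Qed.

Lemma is_derive_Rpower_base (a x : R) : 0 < x ->
  is_derive (fun y => Rpower y a) x (a * Rpower x (a - 1)).
Proof. intros Hx. apply is_derive_Reals, derivable_pt_lim_power, Hx. Qed.

Lemma Rpower_le_1 (x a : R) : 0 < x <= 1 -> 0 <= a -> Rpower x a <= 1.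
Proof. intros Hx Ha. rewrite <- (Rpower_1_base a). apply Rle_Rpower_l; lra. Qed.

Lemma one_sub_Rpower_le (a x : R) : 0 < a -> 0 < x <= 1 -> 1 - Rpower x a <= Rmax a 1 * (1 - x).
Proof.
  intros Ha Hx. destruct (Rle_dec 1 a) as [Ha1|Ha1].
  - rewrite Rmax_left by lra. destruct (Req_dec x 1) as [->|Hx1].
    { rewrite Rpower_1_base. lra. }
    destruct (MVT_cor2 (fun y => Rpower y a) (fun y => a * Rpower y (a - 1)) x 1)
      as [c [Hc Hcx]]; [lra| |].
    { intros c Hc. apply derivable_pt_lim_power. lra. }
    rewrite Rpower_1_base in Hc.
    pose proof (Rpower_le_1 c (a - 1) ltac:(lra) ltac:(lra)).
    assert (0 <= a * (1 - x) * (1 - Rpower c (a - 1))) by (apply Rmult_le_pos; nra).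
    nra.
  - rewrite Rmax_right by lra.
    assert (x <= Rpower x a); [|lra].
    replace (Rpower x a) with (x / Rpower x (1 - a)).
    + pose proof (Rpower_le_1 x (1 - a) Hx ltac:(lra)).
      unfold Rdiv. rewrite <- (Rmult_1_r x) at 1. apply Rmult_le_compat_l; [lra|].
      apply Rle_trans with (/ 1); [rewrite Rinv_1; lra|].
      apply Rinv_le_contravar; [apply exp_pos|assumption].
    + replace a with (1 + - (1 - a)) at 2 by ring.
      rewrite Rpower_plus, Rpower_Ropp, Rpower_1 by lra. reflexivity.
Qed.

Lemma one_sub_Rpower_div_le (a r : R) : 0 < a -> 0 < r < 1 ->
  (1 - Rpower (1 - r) a) / (a * r) <= Rmax a 1 / a.
Proof.
  intros Ha Hr. pose proof (one_sub_Rpower_le a (1 - r) Ha ltac:(lra)) as Hb.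
  apply (Rmult_le_reg_r (a * r)); [nra|].
  replace ((1 - Rpower (1 - r) a) / (a * r) * (a * r)) with (1 - Rpower (1 - r) a)
    by (field; lra).
  replace (Rmax a 1 / a * (a * r)) with (Rmax a 1 * (1 - (1 - r))) by (field; lra).
  exact Hb.
Qed.

Lemma Rdiv_mul_le_compat (M A B A' B' : R) : 0 <= M -> 0 < A' -> 0 < B' ->
  A' <= A -> B' <= B -> M / (A * B) <= M / (A' * B').
Proof.
  intros HM HA HB HAA HBB. unfold Rdiv.
  apply Rmult_le_compat_l; [exact HM|]. apply Rinv_le_contravar; [nra|].
  apply Rmult_le_compat; lra.
Qed.

Lemma one_le_neg_ln_one_sub_div (t : R) : 0 < t < 1 -> 1 <= - ln (1 - t) / t.
Proof.
  intros Ht. assert (ln (1 - t) <= - t).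
  { rewrite <- (ln_exp (- t)). apply ln_le; [lra|]. pose proof (exp_ineq1_le (- t)). lra. }
  apply (Rmult_le_reg_r t); [lra|]. unfold Rdiv. rewrite Rmult_assoc, Rinv_l by lra. lra.
Qed.

Lemma is_RInt_inv_one_sub (t : R) : 0 < t < 1 ->
  is_RInt (fun s => / (1 - t * s)) 0 1 (- ln (1 - t) / t).
Proof.
  intros Ht.
  replace (- ln (1 - t) / t) with (minus (- ln (1 - t * 1) / t) (- ln (1 - t * 0) / t))
    by (unfold minus, plus, opp; simpl; rewrite Rmult_0_r, Rminus_0_r, ln_1, Rmult_1_r;
        field; lra).
  apply (is_RInt_derive (fun s => - ln (1 - t * s) / t)).
  - intros x Hx. rewrite Rmin_left, Rmax_right in Hx by lra.
    auto_derive; [nra|]. field. split; [nra|lra].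
  - intros x Hx. rewrite Rmin_left, Rmax_right in Hx by lra.
    apply (ex_derive_continuous (K := R_AbsRing) (V := R_NormedModule)).
    auto_derive. nra.
Qed.

Lemma is_RInt_Rpower_one_sub (r a : R) : 0 < r < 1 -> 0 < a ->
  is_RInt (fun s => Rpower (1 - s * r) (- (a + 1))) 0 1 ((Rpower (1 - r) (- a) - 1) / (a * r)).
Proof.
  intros Hr Ha.
  assert (HF : forall x, 0 <= x <= 1 ->
    is_derive (fun s => Rpower (1 - s * r) (- a) / (a * r)) x (Rpower (1 - x * r) (- (a + 1)))).
  { intros x Hx. auto_derive.
    - eexists. apply is_derive_Rpower_base. nra.
      rewrite (is_derive_unique (fun y : R => Rpower y (- a)) _ _
                 (is_derive_Rpower_base (- a) (1 + - (x * r)) ltac:(nra))).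
      replace (1 + - (x * r)) with (1 - x * r) by ring.
      replace (- a - 1) with (- (a + 1)) by ring. field. lra. }
  replace ((Rpower (1 - r) (- a) - 1) / (a * r))
    with (minus (Rpower (1 - 1 * r) (- a) / (a * r)) (Rpower (1 - 0 * r) (- a) / (a * r)))
    by (unfold minus, plus, opp; simpl; rewrite Rmult_0_l, Rmult_1_l, Rminus_0_r, Rpower_1_base;
        field; lra).
  apply (is_RInt_derive (fun s => Rpower (1 - s * r) (- a) / (a * r))).
  - intros x Hx. rewrite Rmin_left, Rmax_right in Hx by lra. apply HF, Hx.
  - intros x Hx. rewrite Rmin_left, Rmax_right in Hx by lra.
    apply (continuous_comp (fun s => 1 - s * r) (fun y => Rpower y (- (a + 1)))).
    + apply (ex_derive_continuous (K := R_AbsRing) (V := R_NormedModule)). auto_derive. exact I.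
    + apply (ex_derive_continuous (K := R_AbsRing) (V := R_NormedModule)).
      eexists. apply is_derive_Rpower_base. nra.
Qed.

(** * Weighted bounds for the Cesàro transform *)

Lemma cesaro_0 (t : R) (f : C -> C) : cesaro t f 0 = f 0.
Proof. unfold cesaro. destruct (Ceq_dec 0 0); [reflexivity|congruence]. Qed.

Lemma norm_cesaro_le (t : R) (f : C -> C) (z : C) (phi : R -> R) (I : R) :
  Rabs t <= 1 -> holo_disc f -> in_disc z -> z <> 0%C -> is_RInt phi 0 1 I ->
  (forall s, 0 <= s <= 1 -> Cmod (cesaro_integrand t f (RtoC s * z)) <= phi s) ->
  Cmod (cesaro t f z) <= I.
Proof.
  intros Ht Hf Hz Hz0 Hphi Hle.
  rewrite cesaro_eq_radial_mean. unfold radial_mean.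
  destruct (Ceq_dec z 0) as [|_]; [contradiction|].
  assert (Hzp : 0 < Cmod z) by (apply Cmod_gt_0, Hz0).
  rewrite Cmod_div by exact Hz0.
  apply (Rmult_le_reg_r (Cmod z)); [exact Hzp|].
  unfold Rdiv. rewrite Rmult_assoc, Rinv_l, Rmult_1_r, Rmult_comm by lra.
  rewrite <- (Cminus_0_r z) at 2.
  apply (norm_line_int_le _ _ _ phi); [|exact Hphi|].
  - apply ex_RInt_seg_integrand; [|apply in_disc_0|exact Hz|lra|lra].
    apply holo_disc_continuous, holo_disc_cesaro_integrand; assumption.
  - intros s Hs. unfold seg. rewrite Cminus_0_r, Cplus_0_l.
    apply Hle, Hs.
Qed.

Lemma v_gamma_pos (gamma : R) (w : C) : 0 < v_gamma gamma w.
Proof. apply exp_pos. Qed.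

Lemma v_gamma_0 (gamma : R) : v_gamma gamma 0 = 1.
Proof. unfold v_gamma. rewrite Cmod_0, Rminus_0_r. apply Rpower_1_base. Qed.

Lemma v_gamma_le_1 (gamma : R) (z : C) : 0 < gamma -> in_disc z -> v_gamma gamma z <= 1.
Proof.
  intros Hg Hz. unfold in_disc in Hz. pose proof (Cmod_ge_0 z).
  apply Rpower_le_1; lra.
Qed.

Section CesaroWeightedBounds.

Variables (t gamma M : R) (f : C -> C).
Hypotheses (Ht : 0 <= t <= 1) (Hgamma : 0 < gamma) (Hf : holo_disc f)
  (HM : forall w, in_disc w -> Cmod (f w) * v_gamma gamma w <= M).

Lemma bound_nonneg : 0 <= M.
Proof.
  eapply Rle_trans; [|apply (HM 0 in_disc_0)].
  apply Rmult_le_pos; [apply Cmod_ge_0|left; apply v_gamma_pos].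
Qed.

Lemma cesaro_weighted_0_le (K : R) : 1 <= K ->
  Cmod (cesaro t f 0) * v_gamma gamma 0 <= M * K.
Proof.
  intros HK. pose proof (HM 0 in_disc_0) as H0. pose proof bound_nonneg.
  rewrite cesaro_0. rewrite v_gamma_0, Rmult_1_r in H0 |- *.
  assert (0 <= M * (K - 1)) by (apply Rmult_le_pos; lra). nra.
Qed.

Lemma norm_cesaro_integrand_le (z : C) (s : R) : in_disc z -> 0 <= s <= 1 ->
  Cmod (cesaro_integrand t f (RtoC s * z))
    <= M / (Rpower (1 - s * Cmod z) gamma * (1 - t * s * Cmod z)).
Proof.
  intros Hz Hs. unfold in_disc in Hz. pose proof (Cmod_ge_0 z).
  set (r := Cmod z) in *.
  assert (Hsz : Cmod (RtoC s * z) = s * r) by (apply Cmod_RtoC_mul; lra).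
  assert (Hden : 0 < 1 - t * s * r) by (assert (0 <= t * s <= 1) by (split; nra); nra).
  assert (Hden' : 1 - t * s * r <= Cmod (1 - RtoC t * (RtoC s * z))).
  { pose proof (Cmod_one_sub_ge t (RtoC s * z)) as H1.
    rewrite Hsz, Rabs_pos_eq in H1 by lra. nra. }
  assert (Hfw : Cmod (f (RtoC s * z)) * Rpower (1 - s * r) gamma <= M).
  { rewrite <- Hsz. apply HM. unfold in_disc. rewrite Hsz. nra. }
  pose proof (exp_pos (gamma * ln (1 - s * r))) as Hpow.
  unfold cesaro_integrand. rewrite Cmod_div by (intro E; rewrite E, Cmod_0 in Hden'; lra).
  unfold Rdiv. rewrite Rinv_mult, <- Rmult_assoc.
  apply Rmult_le_compat;
    [apply Cmod_ge_0|left; apply Rinv_0_lt_compat; lra| |apply Rinv_le_contravar; assumption].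
  apply (Rmult_le_reg_r (Rpower (1 - s * r) gamma)); [exact Hpow|].
  rewrite Rmult_assoc, Rinv_l, Rmult_1_r by (unfold Rpower; lra). exact Hfw.
Qed.

Lemma cesaro_weighted_le_log (z : C) : 0 < t < 1 -> in_disc z ->
  Cmod (cesaro t f z) * v_gamma gamma z <= M * (- ln (1 - t) / t).
Proof.
  intros Ht' Hz. pose proof (one_le_neg_ln_one_sub_div t Ht') as HL.
  destruct (Ceq_dec z 0) as [->|Hz0]; [apply cesaro_weighted_0_le, HL|].
  unfold in_disc in Hz. pose proof (Cmod_ge_0 z).
  set (r := Cmod z) in *. set (V := v_gamma gamma z).
  assert (HV : 0 < V) by apply v_gamma_pos.
  apply (Rmult_le_reg_r (/ V)); [apply Rinv_0_lt_compat, HV|].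
  rewrite Rmult_assoc, Rinv_r, Rmult_1_r by lra.
  apply (norm_cesaro_le t f z (fun s => M / (V * (1 - t * s)))).
  - rewrite Rabs_pos_eq; lra.
  - exact Hf.
  - exact Hz.
  - exact Hz0.
  - replace (M * (- ln (1 - t) / t) * / V) with (M / V * (- ln (1 - t) / t)) by (field; lra).
    apply (is_RInt_ext (fun s => M / V * / (1 - t * s))).
    + intros s Hs. unfold Rdiv. rewrite Rinv_mult, Rmult_assoc. reflexivity.
    + apply (is_RInt_scal (V := R_NormedModule)), is_RInt_inv_one_sub, Ht'.
  - intros s Hs. eapply Rle_trans; [apply norm_cesaro_integrand_le; assumption|].
    fold r. assert (Hts : 0 <= t * s <= t) by (split; nra).
    apply Rdiv_mul_le_compat; [apply bound_nonneg|exact HV|lra| |nra].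
    unfold V, v_gamma. fold r. apply Rle_Rpower_l; nra.
Qed.

Lemma cesaro_weighted_le_max (z : C) : in_disc z ->
  Cmod (cesaro t f z) * v_gamma gamma z <= M * (Rmax gamma 1 / gamma).
Proof.
  intros Hz. assert (HK : 1 <= Rmax gamma 1 / gamma).
  { apply (Rmult_le_reg_r gamma); [exact Hgamma|].
    unfold Rdiv. rewrite Rmult_assoc, Rinv_l, Rmult_1_l, Rmult_1_r by lra. apply Rmax_l. }
  destruct (Ceq_dec z 0) as [->|Hz0]; [apply cesaro_weighted_0_le, HK|].
  unfold in_disc in Hz. assert (Hr : 0 < Cmod z) by (apply Cmod_gt_0, Hz0).
  set (r := Cmod z) in *. set (V := v_gamma gamma z).
  assert (HV : 0 < V) by apply v_gamma_pos.
  assert (HVinv : Rpower (1 - r) (- gamma) * V = 1).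
  { unfold V, v_gamma. fold r. rewrite Rpower_Ropp. field. apply Rgt_not_eq, exp_pos. }
  apply Rle_trans with (M * ((Rpower (1 - r) (- gamma) - 1) / (gamma * r)) * V).
  - apply Rmult_le_compat_r; [lra|].
    apply (norm_cesaro_le t f z (fun s => M * Rpower (1 - s * r) (- (gamma + 1)))).
    + rewrite Rabs_pos_eq; lra.
    + exact Hf.
    + exact Hz.
    + exact Hz0.
    + apply (is_RInt_scal (V := R_NormedModule)), is_RInt_Rpower_one_sub; lra.
    + intros s Hs. eapply Rle_trans; [apply norm_cesaro_integrand_le; assumption|].
      fold r. assert (Hsr : 0 < 1 - s * r) by nra.
      assert (0 <= (1 - t) * (s * r)) by (apply Rmult_le_pos; nra).
      replace (M * Rpower (1 - s * r) (- (gamma + 1)))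
        with (M / (Rpower (1 - s * r) gamma * (1 - s * r))).
      * apply Rdiv_mul_le_compat; [apply bound_nonneg|apply exp_pos|lra|lra|lra].
      * rewrite Rpower_Ropp, Rpower_plus, Rpower_1 by lra. reflexivity.
  - replace (M * ((Rpower (1 - r) (- gamma) - 1) / (gamma * r)) * V)
      with (M * ((Rpower (1 - r) (- gamma) * V - V) / (gamma * r))) by (field; lra).
    rewrite HVinv. apply Rmult_le_compat_l; [apply bound_nonneg|].
    apply one_sub_Rpower_div_le; lra.
Qed.

End CesaroWeightedBounds.

Lemma le_weighted_sup (v : C -> R) (h : C -> C) (z : C) : in_disc z ->
  Rbar_le (Cmod (h z) * v z) (weighted_sup v h).
Proof.
  intros Hz. apply (proj1 (Lub_Rbar_correct _)). exists z. split; [exact Hz|reflexivity].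
Qed.

Lemma weighted_sup_le (v : C -> R) (h : C -> C) (B : R) :
  (forall z, in_disc z -> Cmod (h z) * v z <= B) ->
  Rbar_le (weighted_sup v h) B /\ is_finite (weighted_sup v h).
Proof.
  intros HB.
  assert (Hle : Rbar_le (weighted_sup v h) B).
  { apply (proj2 (Lub_Rbar_correct _)). intros x [z [Hz ->]]. exact (HB z Hz). }
  split; [exact Hle|].
  pose proof (le_weighted_sup v h 0 in_disc_0) as Hge.
  destruct (weighted_sup v h); [reflexivity|contradiction|contradiction].
Qed.

Lemma in_Hv_weighted_le (v : C -> R) (f : C -> C) (z : C) : in_Hv v f -> in_disc z ->
  Cmod (f z) * v z <= real (weighted_sup v f).
Proof.
  intros [_ Hfin] Hz. pose proof (le_weighted_sup v f z Hz) as H.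
  rewrite <- Hfin in H. exact H.
Qed.

Lemma cesaro_opnorm_le (v : C -> R) (t B : R) :
  (forall f, holo_disc f -> (forall w, in_disc w -> Cmod (f w) * v w <= 1) ->
     forall z, in_disc z -> Cmod (cesaro t f z) * v z <= B) ->
  Rbar_le (cesaro_opnorm v t) B.
Proof.
  intros HB. apply (proj2 (Lub_Rbar_correct _)). intros x [f [[Hf _] [Hf1 Hx]]].
  eapply Rbar_le_trans; [exact Hx|]. apply weighted_sup_le, HB; [exact Hf|].
  intros w Hw. exact (Rbar_le_trans _ _ (Finite 1) (le_weighted_sup v f w Hw) Hf1).
Qed.

Lemma le_cesaro_opnorm (v : C -> R) (t : R) (f : C -> C) (z : C) :
  in_Hv v f -> Rbar_le (weighted_sup v f) 1 -> in_disc z ->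
  Rbar_le (Cmod (cesaro t f z) * v z) (cesaro_opnorm v t).
Proof.
  intros Hf Hf1 Hz. apply (proj1 (Lub_Rbar_correct _)).
  exists f. split; [exact Hf|]. split; [exact Hf1|]. apply le_weighted_sup, Hz.
Qed.

Lemma one_le_cesaro_opnorm (gamma t : R) : 0 < gamma ->
  Rbar_le 1 (cesaro_opnorm (v_gamma gamma) t).
Proof.
  intros Hg.
  assert (Hb : forall z, in_disc z -> Cmod (RtoC 1) * v_gamma gamma z <= 1)
    by (intros z Hz; rewrite Cmod_1, Rmult_1_l; apply v_gamma_le_1; assumption).
  destruct (weighted_sup_le (v_gamma gamma) (fun _ => RtoC 1) 1 Hb) as [Hle Hfin].
  replace (Finite 1) with (Finite (Cmod (cesaro t (fun _ => RtoC 1) 0) * v_gamma gamma 0))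
    by (rewrite cesaro_0, Cmod_1, v_gamma_0, Rmult_1_l; reflexivity).
  apply le_cesaro_opnorm; [|exact Hle|apply in_disc_0].
  split; [|exact Hfin]. intros z _.
  eexists. apply is_derive_C_abs, (is_derive_const (K := C_AbsRing)).
Qed.

Theorem proposition2p9 (t gamma : R) (ht : 0 < t < 1) (hg : 0 < gamma) :
  (forall f : C -> C, in_Hv (v_gamma gamma) f -> in_Hv (v_gamma gamma) (cesaro t f)) /\
  (1 <= gamma -> cesaro_opnorm (v_gamma gamma) t = Finite 1) /\
  (gamma < 1 -> Rbar_le (cesaro_opnorm (v_gamma gamma) t)
                        (Finite (Rmin (- ln (1 - t) / t) (1 / gamma)))).
Proof.
  assert (Ht : 0 <= t <= 1) by lra.
  split; [|split].
  - intros f Hf. split; [apply holo_disc_cesaro; [rewrite Rabs_pos_eq; lra|apply Hf]|].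
    apply (weighted_sup_le _ _ (real (weighted_sup (v_gamma gamma) f) * (- ln (1 - t) / t))).
    intros z Hz. apply cesaro_weighted_le_log; try assumption; [apply Hf|].
    intros w Hw. apply in_Hv_weighted_le; assumption.
  - intros Hg1. apply Rbar_le_antisym; [|apply one_le_cesaro_opnorm, hg].
    apply cesaro_opnorm_le. intros f Hf Hf1 z Hz.
    replace 1 with (1 * (Rmax gamma 1 / gamma)) by (rewrite Rmax_left by lra; field; lra).
    apply cesaro_weighted_le_max; assumption.
  - intros Hg1. apply cesaro_opnorm_le. intros f Hf Hf1 z Hz. apply Rmin_glb.
    + rewrite <- (Rmult_1_l (- ln (1 - t) / t)). apply cesaro_weighted_le_log; assumption.
    + replace (1 / gamma) with (1 * (Rmax gamma 1 / gamma))
        by (rewrite Rmax_right by lra; field; lra).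
      apply cesaro_weighted_le_max; assumption.
Qed.
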